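(* Let $p\equiv 1\pmod 4$ be a prime and let $u$ be an integer with $u^2\equiv -1\pmod p$ and $1\le u<p/2$. Define points $\mathbf{x}_i=(x_i,y_i)\in\mathbb{Z}^2$ (the extended Brillhart sequence) by $\mathbf{x}_0=(p,0)$, $\mathbf{x}_1=(u,1)$, and, for $i\ge 1$ with $x_i>0$, write $x_{i-1}=q_ix_i+r_i$ with $0\le r_i<x_i$ (so $q_i=\lfloor x_{i-1}/x_i\rfloor$) and set $\mathbf{x}_{i+1}=\mathbf{x}_{i-1}-q_i\mathbf{x}_i=(r_i,\,y_{i-1}-q_iy_i)$. Define also the modified Lagrange (ML) sequence $\mathbf{x}'_i$ by $\mathbf{x}'_0=(p,0)$, $\mathbf{x}'_1=(u,1)$, and, for $i\ge1$, as long as $\|\mathbf{x}'_i\|\le\|\mathbf{x}'_{i-1}\|$, \[ q'_i=\left\lfloor\frac{\mathbf{x}'_i\cdot\mathbf{x}'_{i-1}}{\|\mathbf{x}'_i\|^2}\right\rfloor,\qquad \mathbf{x}'_{i+1}=\mathbf{x}'_{i-1}-q'_i\mathbf{x}'_i. \] Then for every $i\ge 1$ such that $x_i>|y_i|$ (and for which the ML step is defined), $q_i=q'_i$; equivalently, \[ \left\lfloor\frac{x_{i-1}}{x_i}\right\rfloor=\left\lfloor\frac{x_{i-1}x_i+y_{i-1}y_i}{x_i^2+y_i^2}\right\rfloor, \] so that the Brillhart sequence and the ML sequence coincide until the ML algorithm terminates.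
   Context: Here $\cdot$ denotes the standard dot product and $\|\cdot\|$ the Euclidean norm on $\mathbb{R}^2$. The sequence $(x_i)$ is exactly the sequence of remainders of the Euclidean algorithm applied to $p$ and $u$. *)

From Stdlib Require Import ZArith Znumtheory Lia.
Open Scope Z_scope.

Definition vsub (a b : Z * Z) : Z * Z := (fst a - fst b, snd a - snd b).
Definition vscale (q : Z) (b : Z * Z) : Z * Z := (q * fst b, q * snd b).
Definition dot (a b : Z * Z) : Z := fst a * fst b + snd a * snd b.
Definition norm2 (a : Z * Z) : Z := dot a a.

(* Extended Brillhart sequence: state (x_n, x_{n+1}).
   x_{i+1} = x_{i-1} - q_i x_i with q_i = floor(x_{i-1} / x_i)
   (first coordinates).  Only meaningful while the first coordinates
   are positive; the theorem assumes this explicitly. *)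
Fixpoint brill_pair (p u : Z) (n : nat) : (Z * Z) * (Z * Z) :=
  match n with
  | O => ((p, 0), (u, 1))
  | S n' => let '(a, b) := brill_pair p u n' in
            (b, vsub a (vscale (fst a / fst b) b))
  end.

Definition brill (p u : Z) (n : nat) : Z * Z := fst (brill_pair p u n).

Definition brill_q (p u : Z) (i : nat) : Z :=
  fst (brill p u (Nat.pred i)) / fst (brill p u i).

(* Only meaningful while
   ||x'_i|| <= ||x'_{i-1}||; the theorem assumes this explicitly. *)
Fixpoint ml_pair (p u : Z) (n : nat) : (Z * Z) * (Z * Z) :=
  match n with
  | O => ((p, 0), (u, 1))
  | S n' => let '(a, b) := ml_pair p u n' in
            (b, vsub a (vscale (dot b a / norm2 b) b))
  end.

Definition ml (p u : Z) (n : nat) : Z * Z := fst (ml_pair p u n).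

Definition ml_q (p u : Z) (i : nat) : Z :=
  dot (ml p u i) (ml p u (Nat.pred i)) / norm2 (ml p u i).

(** Consecutive Brillhart vectors [a], [b] lie in the lattice
    [{(x, y) | x = u y mod p}], have determinant [+-p], decreasing first and
    weakly increasing, alternating second coordinates.  Writing
    [a = q b + c] with [q = fst a / fst b], we get
    [dot a b = q |b|^2 + dot b c], and [dot b c] is a multiple of [p]
    (as [p | u^2 + 1]) lying in [(-p, |b|^2)] as soon as [|snd b| < fst b];
    hence [dot b c] is the remainder of [dot a b] by [|b|^2] and the two
    floors agree. *)
From Stdlib Require Import ZArith Znumtheory Lia.
Open Scope Z_scope.

Definition det (a b : Z * Z) : Z := fst a * snd b - snd a * fst b.

Definition in_lattice (p u : Z) (v : Z * Z) : Prop := (p | fst v - u * snd v).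

Definition brill_step (a b : Z * Z) : Z * Z := vsub a (vscale (fst a / fst b) b).

Definition ml_step (a b : Z * Z) : Z * Z := vsub a (vscale (dot b a / norm2 b) b).

Lemma dot_comm (a b : Z * Z) : dot a b = dot b a.
Proof. unfold dot; ring. Qed.

Lemma dot_in_lattice (p u : Z) (v w : Z * Z) :
  (p | u * u + 1) -> in_lattice p u v -> in_lattice p u w -> (p | dot v w).
Proof.
  intros [m Hm] [k Hk] [l Hl]; unfold dot.
  exists (k * l * p + k * u * snd w + l * u * snd v + m * snd v * snd w).
  replace (fst v) with (k * p + u * snd v) by lia.
  replace (fst w) with (l * p + u * snd w) by lia.
  transitivity ((k * l * p + k * u * snd w + l * u * snd v) * p
                + (u * u + 1) * snd v * snd w); [ring|].
  rewrite Hm; ring.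
Qed.

(* Opposite signs of [snd b] and [snd c] give [dot b c >= 0] or
   [dot b c > -|det b c| >= -p]; a multiple of [p] above [-p] is nonnegative. *)
Lemma dot_remainder_bounds (p : Z) (b c : Z * Z) :
  0 < p -> 0 <= fst c < fst b -> Z.abs (snd b) < fst b -> snd b * snd c <= 0 ->
  Z.abs (det b c) <= p -> (p | dot b c) -> 0 <= dot b c < norm2 b.
Proof.
  destruct b as [b1 b2], c as [c1 c2]; unfold det, norm2, dot; simpl.
  intros Hp Hc Hb Hsign Hdet [k Hk].
  assert (Hlow : - p < b1 * c1 + b2 * c2 \/ 0 <= b1 * c1 + b2 * c2).
  { destruct (Z.lt_trichotomy c2 0) as [Hc2 | [-> | Hc2]];
      [left; nia | right; nia | left; nia]. }
  split; [|nia].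
  destruct Hlow as [Hlow | Hlow]; [|exact Hlow].
  rewrite Hk in Hlow |- *.
  assert (-1 < k) by nia.
  nia.
Qed.

Definition brill_inv (p u : Z) (a b : Z * Z) : Prop :=
  0 <= fst b < fst a /\ snd a * snd b <= 0 /\ Z.abs (snd a) <= Z.abs (snd b) /\
  Z.abs (det a b) = p /\ in_lattice p u a /\ in_lattice p u b.

Lemma brill_inv_init (p u : Z) : 0 <= u < p -> brill_inv p u (p, 0) (u, 1).
Proof.
  intros Hu; unfold brill_inv, det, in_lattice; simpl.
  repeat split; try lia.
  - exists 1; ring.
  - exists 0; ring.
Qed.

Lemma brill_inv_step (p u : Z) (a b : Z * Z) :
  brill_inv p u a b -> 0 < fst b -> brill_inv p u b (brill_step a b).
Proof.
  destruct a as [a1 a2], b as [b1 b2].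
  unfold brill_inv, brill_step, det, in_lattice, vsub, vscale; simpl.
  intros (Hb & Hsign & Habs & Hdet & Ha_lat & Hb_lat) Hb1.
  pose proof (Z.div_mod a1 b1 ltac:(lia)) as Hdm.
  pose proof (Z.mod_pos_bound a1 b1 Hb1) as Hr.
  set (q := a1 / b1) in *.
  assert (Hq : 1 <= q) by nia.
  repeat split; try lia.
  - destruct (Z.le_gt_cases 0 b2);
      [assert (a2 <= 0) by nia | assert (0 <= a2) by nia]; nia.
  - exact Hb_lat.
  - replace (a1 - q * b1 - u * (a2 - q * b2))
      with ((a1 - u * a2) - q * (b1 - u * b2)) by ring.
    apply Z.divide_sub_r; [exact Ha_lat | apply Z.divide_mul_r; exact Hb_lat].
Qed.

Lemma div_fst_eq_div_dot (p u : Z) (a b : Z * Z) :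
  0 < p -> (p | u * u + 1) -> brill_inv p u a b ->
  0 < fst b -> Z.abs (snd b) < fst b ->
  fst a / fst b = dot a b / norm2 b.
Proof.
  intros Hp Hu Hab Hb1 Hb.
  pose proof (brill_inv_step p u a b Hab Hb1) as (Hc & Hsign & _ & Hdet & Hb_lat & Hc_lat).
  set (c := brill_step a b) in *.
  assert (Hdecomp : dot a b = (fst a / fst b) * norm2 b + dot b c).
  { unfold c, brill_step, norm2, dot, vsub, vscale; simpl; ring. }
  rewrite Hdecomp, Z.div_add_l, (Z.div_small (dot b c)); [lia| |].
  - apply (dot_remainder_bounds p); try lia.
    now apply (dot_in_lattice p u).
  - unfold norm2, dot; nia.
Qed.

Lemma brill_pair_S (p u : Z) (n : nat) :
  brill_pair p u (S n) =
  (snd (brill_pair p u n), brill_step (fst (brill_pair p u n)) (snd (brill_pair p u n))).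
Proof. simpl; now destruct (brill_pair p u n). Qed.

Lemma ml_pair_S (p u : Z) (n : nat) :
  ml_pair p u (S n) =
  (snd (ml_pair p u n), ml_step (fst (ml_pair p u n)) (snd (ml_pair p u n))).
Proof. simpl; now destruct (ml_pair p u n). Qed.

Lemma brill_S (p u : Z) (n : nat) : brill p u (S n) = snd (brill_pair p u n).
Proof. unfold brill; now rewrite brill_pair_S. Qed.

Lemma brill_inv_pair (p u : Z) (n : nat) :
  0 <= u < p ->
  (forall j : nat, (1 <= j <= n)%nat -> 0 < fst (brill p u j)) ->
  brill_inv p u (fst (brill_pair p u n)) (snd (brill_pair p u n)).
Proof.
  intros Hu; induction n as [|n IH]; intros Hpos.
  - now apply brill_inv_init.
  - rewrite brill_pair_S; apply brill_inv_step.
    + apply IH; intros j Hj; apply Hpos; lia.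
    + rewrite <- brill_S; apply Hpos; lia.
Qed.

Lemma brill_monotone (p u : Z) (n m : nat) :
  0 <= u < p -> (n <= m)%nat ->
  (forall j : nat, (1 <= j <= m)%nat -> 0 < fst (brill p u j)) ->
  fst (brill p u m) <= fst (brill p u n) /\
  Z.abs (snd (brill p u n)) <= Z.abs (snd (brill p u m)).
Proof.
  intros Hu Hnm; induction Hnm as [|m Hnm IH]; intros Hpos; [lia|].
  destruct IH as [IH1 IH2]; [intros j Hj; apply Hpos; lia|].
  pose proof (brill_inv_pair p u m Hu ltac:(intros j Hj; apply Hpos; lia))
    as (Hfst & _ & Hsnd & _).
  rewrite brill_S; unfold brill in IH1, IH2 |- *; lia.
Qed.

Lemma ml_pair_eq_brill_pair (p u : Z) (i : nat) :
  0 < p -> 0 <= u < p -> (p | u * u + 1) ->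
  (forall j : nat, (1 <= j <= i)%nat -> 0 < fst (brill p u j)) ->
  Z.abs (snd (brill p u i)) < fst (brill p u i) ->
  forall n : nat, (n < i)%nat -> ml_pair p u n = brill_pair p u n.
Proof.
  intros Hp Hu Hdiv Hpos Hi; induction n as [|n IH]; intros Hn; [reflexivity|].
  rewrite ml_pair_S, brill_pair_S, IH by lia.
  destruct (brill_monotone p u (S n) i Hu ltac:(lia) Hpos) as [Hfst Hsnd].
  pose proof (Hpos (S n) ltac:(lia)) as Hb1.
  pose proof (brill_inv_pair p u n Hu ltac:(intros j Hj; apply Hpos; lia)) as Hab.
  rewrite brill_S in Hfst, Hsnd, Hb1.
  unfold ml_step, brill_step; rewrite dot_comm.
  rewrite <- (div_fst_eq_div_dot p u) by (assumption || lia).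
  reflexivity.
Qed.

Theorem mainTheorem1 (p u : Z) (i : nat) :
  prime p -> p mod 4 = 1 ->
  (u * u) mod p = (-1) mod p -> 1 <= u -> 2 * u < p ->
  (1 <= i)%nat ->
  (* the Brillhart sequence is defined up to index i+1 *)
  (forall j : nat, (1 <= j <= i)%nat -> 0 < fst (brill p u j)) ->
  (* the ML step is defined at all indices 1..i *)
  (forall j : nat, (1 <= j <= i)%nat ->
     norm2 (ml p u j) <= norm2 (ml p u (Nat.pred j))) ->
  fst (brill p u i) > Z.abs (snd (brill p u i)) ->
  brill_q p u i = ml_q p u i /\
  fst (brill p u (Nat.pred i)) / fst (brill p u i) =
    (fst (brill p u (Nat.pred i)) * fst (brill p u i)
     + snd (brill p u (Nat.pred i)) * snd (brill p u i))
    / (fst (brill p u i) ^ 2 + snd (brill p u i) ^ 2).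
Proof.
  intros _ _ Hmod Hu1 Hu2 Hi Hpos _ Hx.
  assert (Hp : 0 < p) by lia.
  assert (Hu : 0 <= u < p) by lia.
  assert (Hdiv : (p | u * u + 1)).
  { apply Zmod_divide; [lia|].
    now rewrite <- Z.add_mod_idemp_l, Hmod, Z.add_mod_idemp_l by lia. }
  destruct i as [|k]; [lia|].
  pose proof (ml_pair_eq_brill_pair p u (S k) Hp Hu Hdiv Hpos ltac:(lia) k ltac:(lia)) as Hml.
  pose proof (brill_inv_pair p u k Hu ltac:(intros j Hj; apply Hpos; lia)) as Hab.
  pose proof (Hpos (S k) ltac:(lia)) as Hb1.
  unfold brill_q, ml_q, ml, brill; simpl Nat.pred.
  rewrite ml_pair_S, brill_pair_S, Hml; simpl fst.
  rewrite brill_S in Hb1, Hx.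
  pose proof (div_fst_eq_div_dot p u _ _ Hp Hdiv Hab Hb1 ltac:(lia)) as Hfloor.
  split.
  - now rewrite dot_comm, Hfloor.
  - rewrite Hfloor; unfold norm2, dot; f_equal; ring.
Qed.
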